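(* Let $\mu$ be a Borel measure on $\mathbb R$ with $\mu(\mathbb R)=1$ and $\mu(\{0\})\neq1$. Then for every $\sigma\in(0,+\infty)$, \[0<\inf_{\lambda_->0}\frac{\int_{y\in\mathbb R}(e^{\lambda_-y}-1)\,d\mu(y)+\sigma}{\lambda_-}+\inf_{\lambda_+>0}\frac{\int_{y\in\mathbb R}(e^{-\lambda_+y}-1)\,d\mu(y)+\sigma}{\lambda_+}.\]
   Context: The integrals and infima take values in $(-\infty,+\infty]$. *)

From HB Require Import structures.
From mathcomp Require Import all_boot all_order all_algebra.
From mathcomp Require Import all_classical all_reals all_analysis.
Set Implicit Arguments. Unset Strict Implicit. Unset Printing Implicit Defensive.

From HB Require Import structures.
From mathcomp Require Import all_boot all_order all_algebra.
From mathcomp Require Import all_classical all_reals all_analysis.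
From mathcomp Require Import measurable_realfun ring lra.
Import Order.TTheory GRing.Theory Num.Theory.
Local Open Scope classical_set_scope.
Local Open Scope ring_scope.

(* Write L(l) = \int (e^(l y) - 1) dmu(y).  Both infima are finite: e^(l y) - 1 is at
   least -|l| N when |y| <= N and at least -1 everywhere, so choosing N with
   mu(|y| > N) <= sigma gives (L(l) + sigma) / |l| >= -N.
   For positivity, mu{0} <> 1 yields d > 0 with P = mu[d, +oo) > 0 or Q = mu(-oo, -d] > 0.
   Given l, m > 0, let c be the identity clipped to [-1/l, 1/m].  From
   e^x >= 1 + x + x^2/4 (x >= 0) we get, with k = d^2/4,
     e^(l y) - 1 >= l c(y) + l^2 k [y >= d],   e^(-m y) - 1 >= -m c(y) + m^2 k [y <= -d].
   Integrating, the bounded terms \int c dmu cancel in the sum of the two quotients, which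
   is therefore at least
     l k P + sigma/l + m k Q + sigma/m >= min(sigma, kP) + min(sigma, kQ) > 0. *)

Section real_inequalities.
Context {R : realType}.
Implicit Types l a b de y c x s t N : R.

Lemma expR_ge1DxDsqr x : 0 <= x -> 1 + x + x ^+ 2 / 4 <= expR x.
Proof.
move=> x0; have -> : expR x = expR (x / 2) ^+ 2 by rewrite expr2 -expRD -splitr.
have h0 : 0 <= 1 + x / 2 by rewrite addr_ge0 // divr_ge0.
apply: le_trans (_ : (1 + x / 2) ^+ 2 <= _); first by rewrite sqrrD expr1n; lra.
by rewrite ler_pXn2r ?nnegrE ?expR_ge0 // expR_ge1Dx.
Qed.

Lemma expR_sub1_ge_clip l a de y c : 0 < l -> 1 <= l * a -> 0 < de ->
  c <= Num.max (- a) y ->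
  l * c + l ^+ 2 * (de ^+ 2 / 4) * ((de <= y)%R)%:R <= expR (l * y) - 1.
Proof.
move=> l0 la d0 cy; have a0 : 0 <= a.
  by rewrite -(pmulr_rge0 _ l0); apply: le_trans la.
have [dy|_] := lerP de y; last first.
  rewrite mulr0 addr0 lerBrDl; move: cy; rewrite le_max => /orP[ca|cy].
    apply: le_trans _ (ltW (expR_gt0 (l * y))); rewrite -(ler_pM2l l0) in ca.
    lra.
  by apply: le_trans _ (expR_ge1Dx _); rewrite lerD2l ler_pM2l.
have y0 : 0 < y := lt_le_trans d0 dy.
have cy' : c <= y by move: cy; rewrite max_r //; lra.
have sq : de ^+ 2 <= y ^+ 2 by rewrite ler_pXn2r // nnegrE ltW.
have := expR_ge1DxDsqr _ (ltW (mulr_gt0 l0 y0)).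
have : l ^+ 2 * de ^+ 2 <= l ^+ 2 * y ^+ 2 by rewrite ler_pM2l ?exprn_gt0.
rewrite -(ler_pM2l l0) in cy'; rewrite mulr1 exprMn mulrA; lra.
Qed.

Lemma tail_ge_expR_sub1 l N y : 0 <= N ->
  - (`|l| * N) - ((N < `|y|)%R)%:R <= expR (l * y) - 1.
Proof.
move=> N0; have [Ny|yN] := ltrP N `|y|.
  by rewrite lerD2r (le_trans _ (expR_ge0 _)) // oppr_le0 mulr_ge0.
rewrite subr0; apply: le_trans (_ : l * y <= _); last first.
  by rewrite lerBrDl expR_ge1Dx.
rewrite lerNl; apply: le_trans (ler_norm _) _.
by rewrite normrN normrM ler_wpM2l.
Qed.

Definition clip a b y := Num.max (- a) (Num.min y b).

Lemma clip_le_max a b y : clip a b y <= Num.max (- a) y.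
Proof. by rewrite ge_max !le_max le_refl /= !ge_min le_refl /= !orbT. Qed.

Lemma oppr_clip_le_max a b y : - clip a b y <= Num.max (- b) (- y).
Proof. by rewrite -oppr_min lerN2 minC le_max le_refl orbT. Qed.

Lemma normr_clip_le a b y : 0 <= a -> 0 <= b -> `|clip a b y| <= a + b.
Proof.
move=> a0 b0; rewrite ler_norml; apply/andP; split.
  by rewrite le_max; apply/orP; left; lra.
by rewrite ge_max; apply/andP; split; [lra|rewrite ge_min; apply/orP; right; lra].
Qed.

Lemma minr_le_sqr_div s x t : 0 < s -> 0 <= x -> 0 < t ->
  Num.min s x <= (t ^+ 2 * x + s) / t.
Proof.
move=> s0 x0 t0; have -> : (t ^+ 2 * x + s) / t = t * x + s / t.
  by field; rewrite gt_eqF.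
have st : 0 <= s / t by rewrite divr_ge0 // ltW.
case: (lerP t 1) => t1.
  have : s <= s / t by rewrite ler_pdivlMr // ler_piMr // ltW.
  have : 0 <= t * x by rewrite mulr_ge0 // ltW.
  by rewrite ge_min; lra.
have : x <= t * x by rewrite ler_peMl // ltW.
by rewrite ge_min; lra.
Qed.

Lemma addr_min_gt0 s x y : 0 < s -> 0 <= x -> 0 <= y -> 0 < x \/ 0 < y ->
  0 < Num.min s x + Num.min s y.
Proof.
move=> s0 x0 y0 xy0.
have mx : 0 <= Num.min s x by rewrite le_min ltW.
have my : 0 <= Num.min s y by rewrite le_min ltW.
by case: xy0 => [x_gt0|y_gt0]; [rewrite ltr_pwDl // lt_min s0 | rewrite ltr_wpDl // lt_min s0].
Qed.

End real_inequalities.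

Lemma ge_ereal_infD (R : realType) (A B : set \bar R) (a b c : R) :
  (forall x, A x -> (a%:E <= x)%E) -> (forall y, B y -> (b%:E <= y)%E) ->
  (forall x y, A x -> B y -> (c%:E <= x + y)%E) ->
  (c%:E <= ereal_inf A + ereal_inf B)%E.
Proof.
move=> aA bB cAB.
have A_fin : ereal_inf A != -oo%E.
  by rewrite gt_eqF // (lt_le_trans (ltNyr a)) // le_ereal_inf_tmp.
have B_fin : ereal_inf B != -oo%E.
  by rewrite gt_eqF // (lt_le_trans (ltNyr b)) // le_ereal_inf_tmp.
have [->|Ay] := eqVneq (ereal_inf A) +oo%E; first by rewrite addye // leey.
have [->|By] := eqVneq (ereal_inf B) +oo%E; first by rewrite addey // leey.
have af : ereal_inf A \is a fin_num by rewrite fin_numE A_fin Ay.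
have bf : ereal_inf B \is a fin_num by rewrite fin_numE B_fin By.
rewrite -(fineK af) -(fineK bf) -EFinD lee_fin leNgt; apply/negP => lt_c.
pose e := (c - (fine (ereal_inf A) + fine (ereal_inf B))) / 2.
have e0 : 0 < e by rewrite divr_gt0 // subr_gt0.
have [x Ax x_lt] := lb_ereal_inf_adherent e0 af.
have [y By' y_lt] := lb_ereal_inf_adherent e0 bf.
have := le_lt_trans (cAB x y Ax By') (lteD x_lt y_lt).
by rewrite -(fineK af) -(fineK bf) -!EFinD lte_fin /e; lra.
Qed.

Lemma le_integral_measurable d (T : measurableType d) (R : realType)
    (mu : {measure set T -> \bar R}) (f g : T -> \bar R) :
  mu.-integrable [set: T] g -> measurable_fun [set: T] f ->
  (forall x, (g x <= f x)%E) -> (\int[mu]_x g x <= \int[mu]_x f x)%E.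
Proof.
move=> ig mf gf; rewrite (integralE _ _ g) (integralE _ _ f).
have mg : measurable_fun [set: T] g by case/integrableP: ig.
apply: leeB; apply: ge0_le_integral => //.
- exact: measurable_funepos.
- exact: measurable_funepos.
- by move=> x _; apply: (funepos_le (D := setT)) => [y _|]; [exact: gf|exact: in_setT].
- exact: measurable_funeneg.
- exact: measurable_funeneg.
- by move=> x _; apply: (funeneg_le (D := setT)) => [y _|]; [exact: gf|exact: in_setT].
Qed.

Section probability_on_R.
Context {R : realType} (mu : probability (measurableTypeR R) R).

Definition tail (N : R) : set (measurableTypeR R) := [set y | N < `|y|].

Lemma measurable_tail N : measurable (tail N).
Proof.
have := normr_measurable measurableT (measurable_itv `]N, +oo[).
by rewrite setTI; congr measurable; apply/seteqP; split=> y; rewrite /= in_itv andbT.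
Qed.

Lemma tail_mass_small e : 0 < e -> exists2 N : R, 0 <= N & (mu (tail N) <= e%:E)%E.
Proof.
move=> e0; pose F n := tail n%:R.
have F_noninc : {homo F : n m / (n <= m)%N >-> (m <= n)%O}.
  move=> n m nm; apply/subsetPset => y /=; apply: le_lt_trans; by rewrite ler_nat.
have F_cap : \bigcap_n F n = set0.
  apply/seteqP; split => // y /= /(_ (Num.truncn `|y|).+1 I).
  by rewrite /F /tail /= ltNge (ltW (truncnS_gt _)).
have F0_fin : (mu (F 0%N) < +oo)%E.
  by rewrite ltey_eq fin_num_measure //; exact: measurable_tail.
have := nonincreasing_cvg_mu F0_fin (fun n => measurable_tail _) _ F_noninc.
rewrite F_cap measure0 => /(_ measurable0) /fine_cvgP [_ /(cvgr_lt 0)/(_ e e0)] [n _ tail_lt].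
exists n%:R => //; apply/ltW.
rewrite -(@fineK _ (mu (tail n%:R))) ?lte_fin ?(tail_lt n) //=.
by rewrite fin_num_measure //; exact: measurable_tail.
Qed.

Lemma mass_away_from0 : mu [set 0] != 1%E ->
  exists2 de : R, 0 < de &
    (0 < mu `[de, +oo[%classic)%E \/ (0 < mu `]-oo, (- de)%R]%classic)%E.
Proof.
move=> mu0; apply/not_exists2P => no_mass; move/negP: mu0; apply.
pose F n : set (measurableTypeR R) :=
  `[n.+1%:R^-1, +oo[%classic `|` `]-oo, - n.+1%:R^-1]%classic.
have mF n : measurable (F n) by apply: measurableU; exact: measurable_itv.
have F0 n : mu (F n) = 0%E.
  have [|/not_orP[]] := no_mass n.+1%:R^-1; first by rewrite invr_gt0.
  move=> /negP; rewrite -leNgt => mu1 /negP; rewrite -leNgt => mu2.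
  apply/eqP; rewrite eq_le measure_ge0 andbT.
  apply: le_trans (measureU2 _ _ _) _; try exact: measurable_itv.
  by rewrite -(adde0 0%E) leeD.
have F_cover : ~` [set 0] `<=` \bigcup_n F n.
  move=> y /eqP y0; have y_gt0 : 0 < `|y| by rewrite normr_gt0.
  exists (Num.truncn `|y|^-1) => //.
  have : (Num.truncn `|y|^-1).+1%:R^-1 < `|y|.
    by rewrite -[ltRHS]invrK ltf_pV2 ?posrE ?invr_gt0 ?truncnS_gt.
  rewrite /F /= !in_itv /= andbT; case: (lerP 0 y) => y0'.
    by rewrite ger0_norm // => /ltW; left.
  by rewrite ltr0_norm // lerNr => /ltW; right.
have m1 : measurable (~` [set 0] : set (measurableTypeR R)).
  by apply: measurableC; exact: measurable_set1.
have : (mu (~` [set 0%R]) <= 0)%E.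
  apply: le_trans (measure_sigma_subadditive mu mF m1 F_cover) _.
  by rewrite eseries0 // => n _ _; exact: F0.
rewrite probability_setC; last exact: measurable_set1.
rewrite leeBlDr ?fin_num_measure // add0e => mu1.
by apply/eqP/le_anti; rewrite mu1 probability_le1.
Qed.

(* Dividing by |l| rather than l lets the second infimum be taken at -l. *)
Definition exp_moment_ratio (s l : R) : \bar R :=
  ((\int[mu]_y (expR (l * y) - 1)%:E + s%:E) * (`|l|^-1)%:E)%E.

Lemma measurable_expR_sub1 l :
  measurable_fun [set: measurableTypeR R] (fun y => expR (l * y) - 1).
Proof.
apply: measurable_funB => //; apply: measurableT_comp; first exact: measurable_expR.
by apply: measurable_funM => //; exact: measurable_cst.
Qed.

Lemma exp_moment_ratio_ge s l h (g : measurableTypeR R -> R) (A : set (measurableTypeR R)) :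
  l != 0 -> mu.-integrable [set: measurableTypeR R] (EFin \o g) -> measurable A ->
  (forall y, `|l| * g y + h * \1_A y <= expR (l * y) - 1) ->
  ((\int[mu]_y g y + (h * fine (mu A) + s) / `|l|)%:E <= exp_moment_ratio s l)%E.
Proof.
move=> l0 ig mA g_le; have l_gt0 : 0 < `|l| by rewrite normr_gt0.
have int_le : ((`|l| * (\int[mu]_y g y) + h * fine (mu A))%:E <=
               \int[mu]_y (expR (l * y) - 1)%:E)%E.
  have -> : ((`|l| * (\int[mu]_y g y) + h * fine (mu A))%:E =
      \int[mu]_y (`|l|%:E * (g y)%:E + h%:E * (\1_A y)%:E))%E.
    rewrite integralD //; last 2 first.
    - exact: integrableZl.
    - by apply: integrableZl => //; exact: integrable_indic.
    rewrite integralZl // integralZl //; last exact: integrable_indic.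
    rewrite integral_indic // setIT EFinD !EFinM fineK; last first.
      by have := integrable_fin_num measurableT ig.
    by rewrite fineK // fin_num_measure.
  apply: le_integral_measurable => [||y].
  - apply: integrableD => //; apply: integrableZl => //; exact: integrable_indic.
  - by apply/measurable_EFinP; exact: measurable_expR_sub1.
  - by rewrite -!EFinM -EFinD lee_fin.
apply: le_trans (lee_wpmul2r _ (leeD2r s%:E int_le)); last by rewrite lee_fin invr_ge0 ltW.
by rewrite -EFinD -EFinM lee_fin le_eqVlt; apply/orP; left; apply/eqP; field; rewrite gt_eqF.
Qed.

Lemma exp_moment_ratio_lbound s : 0 < s ->
  exists N : R, forall l, l != 0 -> ((- N)%:E <= exp_moment_ratio s l)%E.
Proof.
move=> s0; have [N N0 tail_s] := tail_mass_small _ s0; exists N => l l0.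
have int_cst : mu.-integrable [set: measurableTypeR R] (EFin \o cst (- N)).
  exact: finite_measure_integrable_cst.
have ratio_ge := exp_moment_ratio_ge s l (-1) (cst (- N)) (tail N) l0 int_cst
  (measurable_tail N).
apply: (le_trans _ (ratio_ge _)) => [|y].
  have mu1 : fine (mu [set: measurableTypeR R]) = 1 by rewrite probability_setT.
  rewrite Rintegral_cst // mu1 mulr1 lee_fin lerDl mulN1r.
  rewrite divr_ge0 // addrC subr_ge0 -lee_fin fineK // fin_num_measure //.
  exact: measurable_tail.
rewrite indicE; have -> : (y \in tail N) = (N < `|y|).
  by apply/idP/idP; rewrite in_setE.
by rewrite mulN1r mulrN; apply: tail_ge_expR_sub1.
Qed.

Lemma exp_moment_ratio_pair_ge s de l m : 0 < s -> 0 < de -> 0 < l -> 0 < m ->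
  ((Num.min s (de ^+ 2 / 4 * fine (mu `[de, +oo[%classic)) +
    Num.min s (de ^+ 2 / 4 * fine (mu `]-oo, (- de)%R]%classic)))%:E <=
   exp_moment_ratio s l + exp_moment_ratio s (- m))%E.
Proof.
move=> s0 de0 l0 m0; set k := de ^+ 2 / 4.
pose c := clip l^-1 m^-1.
have mc : measurable_fun [set: measurableTypeR R] c.
  apply: measurable_maxr; first exact: measurable_cst.
  by apply: measurable_minr; [exact: measurable_id | exact: measurable_cst].
have ic : mu.-integrable [set: measurableTypeR R] (EFin \o c).
  apply: measurable_bounded_integrable => //.
    by rewrite ltey_eq fin_num_measure.
  exists (l^-1 + m^-1); split; first exact: num_real.
  by move=> M lt_M y _; apply: le_trans (ltW lt_M); rewrite normr_clip_le // invr_ge0 ltW.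
have icN : mu.-integrable [set: measurableTypeR R] (EFin \o (fun y => - c y)).
  have -> : EFin \o (fun y => - c y) = -%E \o (EFin \o c) by apply/funext => y.
  exact: integrableN.
have int_cN : (\int[mu]_y - c y = - \int[mu]_y c y)%R.
  by rewrite -[RHS]mulN1r -RintegralZl //; apply: eq_Rintegral => y _; rewrite mulN1r.
have F1 := exp_moment_ratio_ge s l (l ^+ 2 * k) c `[de, +oo[%classic (lt0r_neq0 l0)
  ic (measurable_itv _).
have mN0 : - m != 0 by rewrite oppr_eq0 gt_eqF.
have F2 := exp_moment_ratio_ge s (- m) (m ^+ 2 * k) (fun y => - c y) `]-oo, (- de)%R]%classic
  mN0 icN (measurable_itv _).
rewrite gtr0_norm // in F1; rewrite normrN gtr0_norm // in F2.
have ll : 1 <= l * l^-1 by rewrite mulfV ?gt_eqF.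
have mm : 1 <= m * m^-1 by rewrite mulfV ?gt_eqF.
apply: le_trans (leeD (F1 _) (F2 _)) => [|y|y].
- rewrite -EFinD lee_fin int_cN.
  have P0 : 0 <= k * fine (mu `[de, +oo[%classic).
    by rewrite mulr_ge0 ?divr_ge0 ?sqr_ge0 // fine_ge0 // measure_ge0.
  have Q0 : 0 <= k * fine (mu `]-oo, (- de)%R]%classic).
    by rewrite mulr_ge0 ?divr_ge0 ?sqr_ge0 // fine_ge0 // measure_ge0.
  have := minr_le_sqr_div _ _ _ s0 P0 l0; have := minr_le_sqr_div _ _ _ s0 Q0 m0.
  rewrite !mulrA; lra.
- rewrite indicE mem_setE in_itv /= andbT.
  by apply: (expR_sub1_ge_clip _ _ _ _ _ l0 ll de0); exact: clip_le_max.
- rewrite indicE mem_setE in_itv /= lerNr mulNr -mulrN.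
  by apply: (expR_sub1_ge_clip _ _ _ _ _ m0 mm de0); exact: oppr_clip_le_max.
Qed.

Lemma exp_moment_ratio_pair_lbound s : mu [set 0] != 1%E -> 0 < s ->
  exists2 c : R, 0 < c &
    forall l m, 0 < l -> 0 < m -> (c%:E <= exp_moment_ratio s l + exp_moment_ratio s (- m))%E.
Proof.
move=> mu0 s0; have [de de0 mass] := mass_away_from0 mu0.
have k0 : 0 < de ^+ 2 / 4 by rewrite divr_gt0 // exprn_gt0.
have kmu_ge0 A : 0 <= de ^+ 2 / 4 * fine (mu A).
  by rewrite mulr_ge0 ?(ltW k0) // fine_ge0 // measure_ge0.
have kmu_gt0 A : measurable A -> (0 < mu A)%E -> 0 < de ^+ 2 / 4 * fine (mu A).
  by move=> mA muA; rewrite pmulr_rgt0 // fine_gt0 // muA ltey_eq fin_num_measure.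
exists (Num.min s (de ^+ 2 / 4 * fine (mu `[de, +oo[%classic)) +
        Num.min s (de ^+ 2 / 4 * fine (mu `]-oo, (- de)%R]%classic))).
  apply: addr_min_gt0; rewrite ?kmu_ge0 //.
  by case: mass => mass; [left|right]; apply: kmu_gt0 => //; exact: measurable_itv.
by move=> l m l0 m0; exact: exp_moment_ratio_pair_ge.
Qed.

Lemma exp_moment_ratioE s l : 0 < l ->
  exp_moment_ratio s l = ((\int[mu]_y (expR (l * y) - 1)%:E + s%:E) * (l^-1)%:E)%E.
Proof. by move=> l0; rewrite /exp_moment_ratio gtr0_norm. Qed.

Lemma exp_moment_ratioNE s l : 0 < l ->
  exp_moment_ratio s (- l) = ((\int[mu]_y (expR (- l * y) - 1)%:E + s%:E) * (l^-1)%:E)%E.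
Proof. by move=> l0; rewrite /exp_moment_ratio normrN gtr0_norm. Qed.

End probability_on_R.

Theorem lemma11 (R : realType) (mu : probability (measurableTypeR R) R)
  (hmu0 : mu [set (0 : R)] != 1%E) (sigma : R) (hsigma : 0 < sigma) :
  (0 <
   ereal_inf [set ((\int[mu]_y ((expR (l * y) - 1)%R)%:E + sigma%:E) * (l^-1)%R%:E)%E
             | l in [set l : R | (0 < l)%R]] +
   ereal_inf [set ((\int[mu]_y ((expR (- l * y) - 1)%R)%:E + sigma%:E) * (l^-1)%R%:E)%E
             | l in [set l : R | (0 < l)%R]])%E.
Proof.
have [N ratio_ge] := exp_moment_ratio_lbound mu _ hsigma.
have [c c0 pair_ge] := exp_moment_ratio_pair_lbound mu _ hmu0 hsigma.
apply: (@lt_le_trans _ _ c%:E); first by rewrite lte_fin.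
apply: (@ge_ereal_infD _ _ _ (- N) (- N)) => [_ [l l0 <-]|_ [l l0 <-]|_ _ [l l0 <-] [m m0 <-]].
- by rewrite -exp_moment_ratioE //; apply: ratio_ge; rewrite gt_eqF.
- by rewrite -exp_moment_ratioNE //; apply: ratio_ge; rewrite oppr_eq0 gt_eqF.
- by rewrite -exp_moment_ratioE // -exp_moment_ratioNE //; exact: pair_ge.
Qed.
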